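(* Let $\dot G$ be a connected, non-complete, $5$-regular and $3$ net-regular SRSG belonging to $\mathcal C_1\cup\mathcal C_4\cup\mathcal C_5$ that contains no unbalanced triangle. Then $\dot G$ is isomorphic to $\dot S^2_{10}$ (parameters $(10,5,0,0,1)$) or to $\dot S^3_{10}$ (parameters $(10,5,3,0,-2)$).
   Context: A signed graph $\dot G=(G,\sigma)$ is a simple graph $G$ with $\sigma:E(G)\to\{\pm1\}$; adjacency matrix $A_{\dot G}$ has entries $\sigma(v_iv_j)$ for adjacent vertices, $0$ otherwise. Degree and connectedness refer to $G$; net-degree is $d^+(v)-d^-(v)$ (numbers of positive minus negative incident edges); $\rho$ net-regular means all net-degrees equal $\rho$. A triangle is unbalanced if the product of its edge signs is $-1$. $\dot G$ on $n$ vertices is an SRSG if it is neither homogeneous (all edges of one sign) complete nor edgeless and there are $r\in\mathbb N$, $a,b,c\in\mathbb Z$ with $(A^2_{\dot G})_{ii}=r$, $(A^2_{\dot G})_{ij}=a$ for positive edges, $b$ for negative edges, $c$ for distinct non-adjacent pairs; parameters $(n,r,a,b,c)$. Classes of inhomogeneous SRSGs: $\mathcal C_1$: $a=-b$ and (complete, or non-complete with $c\ne0$); $\mathcal C_4$: $a\ne-b$, non-complete, $c=0$; $\mathcal C_5$: $a\neq -b$, non-complete, $c\notin\{0,\frac{a+b}2\}$. $\dot S^2_{10}$ is $K_{5,5}$ with the edges of a perfect matching negative and all other edges positive. $\dot S^3_{10}$ is the union of two vertex-disjoint all-positive copies of $K_5$ on $\{u_1,\dots,u_5\}$ and $\{w_1,\dots,w_5\}$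 together with negative edges $u_tw_t$, $t=1,\dots,5$. *)

(* A x y = 1 : positive edge, -1 : negative edge,
   0 : non-adjacent. *)
From mathcomp Require Import all_boot all_order all_algebra.
Set Implicit Arguments. Unset Strict Implicit. Unset Printing Implicit Defensive.
Import Order.TTheory GRing.Theory Num.Theory.
Local Open Scope ring_scope.

Section SignedGraphs.
Variable T : finType.
Variable A : T -> T -> int.

Definition signed_graph : Prop :=
  [/\ forall x, A x x = 0,
      forall x y, A x y = A y x &
      forall x y, A x y \in [:: -1; 0; 1]].

Definition adjacent (x y : T) : bool := A x y != 0.

Definition A2 (x y : T) : int := \sum_(z : T) A x z * A z y.

Definition degree (x : T) : nat := #|[set y | adjacent x y]|.
Definition net_degree (x : T) : int := \sum_(y : T) A x y.

Definition regular (k : nat) : Prop := forall x, degree x = k.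
Definition net_regular (rho : int) : Prop := forall x, net_degree x = rho.

Definition sg_connected : Prop :=
  forall x y, connect (fun u v => adjacent u v) x y.

Definition complete : Prop := forall x y, x != y -> adjacent x y.
Definition edgeless : Prop := forall x y, A x y = 0.
Definition homogeneous : Prop :=
  (forall x y, A x y != -1) \/ (forall x y, A x y != 1).

Definition is_SRSG (n r : nat) (a b c : int) : Prop :=
  [/\ #|T| = n,
      ~ (homogeneous /\ complete),
      ~ edgeless &
      [/\ (forall x, A2 x x = r%:Z),
          (forall x y, A x y = 1 -> A2 x y = a),
          (forall x y, A x y = -1 -> A2 x y = b) &
          (forall x y, x != y -> A x y = 0 -> A2 x y = c)]].

Definition class_C1 (a b c : int) : Prop :=
  ~ homogeneous /\ a = - b /\ (complete \/ (~ complete /\ c != 0)).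
Definition class_C4 (a b c : int) : Prop :=
  ~ homogeneous /\ a != - b /\ ~ complete /\ c = 0.
Definition class_C5 (a b c : int) : Prop :=
  ~ homogeneous /\ a != - b /\ ~ complete /\ c != 0 /\ 2 * c != a + b.

Definition unbalanced_triangle (x y z : T) : Prop :=
  [/\ adjacent x y, adjacent y z, adjacent z x & A x y * A y z * A z x = -1].

Definition no_unbalanced_triangle : Prop :=
  forall x y z, ~ unbalanced_triangle x y z.

End SignedGraphs.

Definition sg_iso (T U : finType) (A : T -> T -> int) (B : U -> U -> int) : Prop :=
  exists f : T -> U, bijective f /\ forall x y, B (f x) (f y) = A x y.

(* Vertex set of the two examples: bool * 'I_5; (false, t) = u_t, (true, t) = w_t *)
Definition V10 := (bool * 'I_5)%type.

(* S^2_10 : K_{5,5} (parts u, w), matching u_t w_t negative, other edges positive *)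
Definition S2_10 (p q : V10) : int :=
  if p.1 == q.1 then 0 else if p.2 == q.2 then -1 else 1.

(* S^3_10 : two positive K_5's on u's and w's, plus negative edges u_t w_t *)
Definition S3_10 (p q : V10) : int :=
  if p.1 == q.1 then (if p.2 == q.2 then 0 else 1)
  else (if p.2 == q.2 then -1 else 0).

From mathcomp Require Import all_boot all_order all_algebra.
From mathcomp Require Import zify ring lra.
Set Implicit Arguments. Unset Strict Implicit. Unset Printing Implicit Defensive.
Import Order.TTheory GRing.Theory Num.Theory.
Local Open Scope ring_scope.

(* Degree 5 and net-degree 3 leave every vertex x exactly one negative
   neighbour, its mate, and four positive ones.  As no triangle is unbalanced,
   a negative edge lies in no triangle, so A^2 vanishes on negative edges
   (b = 0) and counts common positive neighbours on positive edges; hence a is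
   the number k <= 3 of triangles through each positive edge.  Summing a row
   of A^2 gives 4a + c |Z(x)| = 4, where Z(x) is the set of the n - 6 vertices
   non-adjacent to x.
   - k = 0: the graph is triangle free, so n >= 10, which forces c = 1,
     n = 10 and the graph is K_{5,5} with the mates as negative matching.
   - k = 1: then c = 0 and A^2 = 5 + A + N, with N the mate involution.  The
     positive graph is an edge-disjoint union of triangles, so 2 + (A + N) is
     positive semidefinite; this contradicts tr A = 0, tr A^2 = 5n and
     tr A^3 = 4n.
   - k = 2: some non-adjacent pair has A^2 >= 1, so c > 0, whereas
     8 + c |Z(x)| = 4.
   - k = 3: closed positive neighbourhoods are 5-cliques and
     c = -1 - A(mate x, mate y) on every positive edge xy; three disjoint
     cliques rule out c = -1, leaving c = -2, n = 10 and the graph S^3_10. *)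

Lemma sumr_indicator (T : finType) (P : pred T) :
  \sum_(y : T) ((P y)%:R : int) = #|[set y | P y]|%:R.
Proof.
rewrite (eq_bigr (fun y => if P y then 1 else 0)); last by move=> y _; case: (P y).
rewrite -big_mkcond /= sumr_const.
by rewrite (eq_card (B:=P)) // => y; rewrite inE.
Qed.

Lemma mxtrace_quad_ge0 n (Q M : 'M[int]_n) :
  (forall w : 'I_n -> int, 0 <= \sum_j w j * \sum_l Q j l * w l) ->
  0 <= \tr (M^T *m Q *m M).
Proof.
move=> Qpsd; apply: sumr_ge0 => i _; rewrite -mulmxA mxE.
have := Qpsd (fun j => M j i); congr (_ <= _); apply: eq_bigr => j _.
by rewrite !mxE; congr (_ * _); apply: eq_bigr => l _; rewrite mxE.
Qed.

Lemma mxtrace_const n (M : 'M[int]_n) c : (forall i, M i i = c) -> \tr M = c * n%:R.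
Proof.
by move=> Mc; rewrite /mxtrace (eq_bigr _ (fun i _ => Mc i)) sumr_const card_ord mulr_natr.
Qed.

Lemma horner_mx_sym k (B : 'M[int]_k.+1) (p : {poly int}) :
  B^T = B -> (horner_mx B p)^T = horner_mx B p.
Proof.
move=> BT; elim/poly_ind: p => [|p c IH]; first by rewrite rmorph0 trmx0.
rewrite rmorphD rmorphM /= horner_mx_X horner_mx_C linearD /= tr_scalar_mx.
rewrite -mulmxE trmx_mul BT IH; congr (_ + _).
by have := comm_mx_horner p (comm_mx_refl B).
Qed.

Lemma sqr_sub3_not_psd k (B : 'M[int]_k.+1) :
  B^T = B -> (B ^+ 2 - B - 5) ^+ 2 = 1 ->
  \tr B = 0 -> \tr (B ^+ 2) = 5 * k.+1%:R -> \tr (B ^+ 3) = 4 * k.+1%:R ->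
  exists M : 'M[int]_k.+1, \tr (M^T *m (B ^+ 2 - 3) *m M) < 0.
Proof.
move=> BT N2 tr1 tr2 tr3.
(* N := B^2 - B - 5 is an involution commuting with B, and (1 - N)(B - 3)
   kills the (+1)-eigenspace of N; modulo N^2 = 1, the product
   h(B) (B^2 - 3) h(B) is the cubic sP(B), whose trace is -8 (k + 1). *)
pose nP : {poly int} := 'X ^+ 2 - 'X - 5.
pose hP : {poly int} := (1 - nP) * ('X - 3).
pose qP : {poly int} := 'X ^+ 2 - 3.
pose kP : {poly int} := 'X ^+ 4 - 6 * 'X ^+ 3 + 4 * 'X ^+ 2 + 28 * 'X - 37.
pose sP : {poly int} := - (6 * 'X ^+ 3) + 20 * 'X ^+ 2 + 22 * 'X - 84.
have hqh : hP * qP * hP = sP + kP * (nP ^+ 2 - 1) by rewrite /hP /qP /sP /kP /nP; ring.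
have nP0 : horner_mx B (nP ^+ 2 - 1) = 0.
  by rewrite /nP !(rmorphB, rmorphXn, rmorph1, rmorph_nat) /= horner_mx_X N2 subrr.
exists (horner_mx B hP); rewrite horner_mx_sym // !mulmxE.
have -> : B ^+ 2 - 3 = horner_mx B qP.
  by rewrite /qP !(rmorphB, rmorphXn, rmorph_nat) /= horner_mx_X.
rewrite -!rmorphM hqh rmorphD rmorphM /= nP0 mulr0 addr0.
rewrite /sP rmorphB rmorph_nat !rmorphD rmorphN !rmorphM !rmorph_nat /= !horner_mx_X -!expr2 -exprS.
have trMn (c : nat) (X : 'M[int]_k.+1) : \tr (c%:R * X) = c%:R * \tr X.
  by rewrite mulr_natl raddfMn mulr_natl.
rewrite raddfB raddfD raddfD raddfN /= !trMn tr1 tr2 tr3.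
have tr_one : \tr (1 : 'M[int]_k.+1) = k.+1%:R by exact: mxtrace1.
rewrite -(mulr1 (84 : 'M[int]_k.+1)) trMn tr_one.
have : 0 < k.+1%:R :> int by [].
lia.
Qed.

Lemma sum3_sym_sqr (T : finType) (t : T -> T -> T -> int) (w : T -> int) :
  (forall x y z, t x y z = t y x z) -> (forall x y z, t x y z = t x z y) ->
  \sum_x \sum_y \sum_z t x y z * (w x + w y + w z) ^+ 2 =
  3 * (\sum_x \sum_y \sum_z t x y z * w x ^+ 2)
  + 6 * (\sum_x \sum_y \sum_z t x y z * (w x * w y)).
Proof.
move=> t12 t23.
pose S g := \sum_x \sum_y \sum_z t x y z * g x y z.
have S12 g : S g = S (fun x y z => g y x z).
  by rewrite /S exchange_big; do 3 (apply: eq_bigr => ? _); rewrite t12.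
have S23 g : S g = S (fun x y z => g x z y).
  by apply: eq_bigr => x _; rewrite exchange_big; do 2 (apply: eq_bigr => ? _); rewrite t23.
have Sy : S (fun _ y _ => w y ^+ 2) = S (fun x _ _ => w x ^+ 2) := S12 _.
have Sz : S (fun _ _ z => w z ^+ 2) = S (fun x _ _ => w x ^+ 2) := etrans (S23 _) (S12 _).
have Syz : S (fun _ y z => w y * w z) = S (fun x y _ => w x * w y) := etrans (S12 _) (S23 _).
have Sxz : S (fun x _ z => w x * w z) = S (fun x y _ => w x * w y) := S23 _.
have expand : S (fun x y z => (w x + w y + w z) ^+ 2) =
    S (fun x _ _ => w x ^+ 2) + S (fun _ y _ => w y ^+ 2) + S (fun _ _ z => w z ^+ 2)
    + 2 * S (fun x y _ => w x * w y) + 2 * S (fun _ y z => w y * w z)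
    + 2 * S (fun x _ z => w x * w z).
  rewrite /S !mulr_sumr -!big_split; apply: eq_bigr => x _.
  rewrite !mulr_sumr -!big_split; apply: eq_bigr => y _.
  rewrite !mulr_sumr -!big_split; apply: eq_bigr => z _ /=; ring.
change (S (fun x y z => (w x + w y + w z) ^+ 2) =
  3 * S (fun x _ _ => w x ^+ 2) + 6 * S (fun x y _ => w x * w y)).
rewrite expand Sy Sz Syz Sxz; ring.
Qed.

Lemma card_disjointU (T : finType) (U V : {set T}) :
  [disjoint U & V] -> #|U :|: V| = (#|U| + #|V|)%N.
Proof. by move=> d; rewrite cardsU disjoint_setI0 // cards0 subn0. Qed.

Lemma card5_ord_inj (T : finType) (U : {set T}) : #|U| = 5%N ->
  exists u : 'I_5 -> T, injective u /\ forall t, u t \in U.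
Proof.
move=> cU; exists (fun t => enum_val (cast_ord (esym cU) t)); split.
  by move=> s t /enum_val_inj /cast_ord_inj.
by move=> t; apply: enum_valP.
Qed.

Lemma sg_iso_of_inj (T : finType) (A : T -> T -> int) (B : V10 -> V10 -> int)
  (h : V10 -> T) : injective h -> #|T| = 10%N ->
  (forall p q, A (h p) (h q) = B p q) -> sg_iso A B.
Proof.
move=> hinj cT hAB.
have : bijective h.
  by apply: inj_card_bij => //; rewrite cT card_prod card_bool card_ord.
case=> g hg gh; exists g; split; first by exists h.
by move=> x y; rewrite -hAB !gh.
Qed.

Section SignedGraph.
Variables (T : finType) (A : T -> T -> int).
Hypothesis sgA : signed_graph A.
Hypothesis reg5 : regular A 5.
Hypothesis net3 : net_regular A 3.
Hypothesis notri : no_unbalanced_triangle A.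

Lemma A_diag x : A x x = 0. Proof. by case: sgA. Qed.
Lemma A_sym x y : A x y = A y x. Proof. by case: sgA. Qed.
Lemma A_vals x y : [\/ A x y = -1, A x y = 0 | A x y = 1].
Proof.
case: sgA => _ _ /(_ x y); rewrite !inE => /or3P[] /eqP ->.
- by constructor 1.
- by constructor 2.
- by constructor 3.
Qed.

Definition pos_nbr x := [set y | A x y == 1].
Definition neg_nbr x := [set y | A x y == -1].

Lemma card_pos_neg x : #|pos_nbr x| = 4%N /\ #|neg_nbr x| = 1%N.
Proof.
have net : net_degree A x = #|pos_nbr x|%:R - #|neg_nbr x|%:R.
  rewrite /net_degree /pos_nbr /neg_nbr -!sumr_indicator -sumrB; apply: eq_bigr => y _.
  by case: (A_vals x y) => ->.
have deg : (degree A x)%:R = #|pos_nbr x|%:R + #|neg_nbr x|%:R :> int.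
  rewrite /degree -sumr_indicator /pos_nbr /neg_nbr -!sumr_indicator -big_split /=.
  by apply: eq_bigr => y _; rewrite /adjacent; case: (A_vals x y) => ->.
rewrite net3 in net; rewrite reg5 in deg; lia.
Qed.

Definition mate x := odflt x [pick y | A x y == -1].

Lemma A_mate x : A x (mate x) = -1.
Proof.
rewrite /mate; case: pickP => [y /eqP //|none].
have := (card_pos_neg x).2; rewrite /neg_nbr.
by rewrite (eq_card (B := pred0)) ?card0 // => y; rewrite inE none.
Qed.

Lemma mate_uniq x y : A x y = -1 -> y = mate x.
Proof.
move=> Hy; have /eqP/cards1P[z Hz] := (card_pos_neg x).2.
have : y \in neg_nbr x by rewrite inE Hy.
have : mate x \in neg_nbr x by rewrite inE A_mate.
by rewrite Hz !inE => /eqP -> /eqP.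
Qed.

Lemma mateK : involutive mate.
Proof. by move=> x; apply/esym/mate_uniq; rewrite A_sym A_mate. Qed.

Lemma mate_inj : injective mate. Proof. exact: inv_inj mateK. Qed.

Lemma mate_neq x : mate x != x.
Proof. by apply/eqP=> e; have := A_mate x; rewrite e A_diag. Qed.

Lemma neg_edge_triangle_free x y z :
  A x y = -1 -> A y z != 0 -> A z x != 0 -> False.
Proof.
move=> Hxy Hyz Hzx.
have zx : z != x by apply: contraNneq Hzx => ->; rewrite A_diag.
have zy : z != y by apply: contraNneq Hyz => ->; rewrite A_diag.
have other u v w : A u v = -1 -> A u w != 0 -> w != v -> A u w = 1.
  move=> Hv Hw wv; case: (A_vals u w) => // [Hw'|Hw']; last by rewrite Hw' in Hw.
  by move: wv; rewrite (mate_uniq Hw') -(mate_uniq Hv) eqxx.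
have Hyz1 : A y z = 1 by apply: (other _ x); rewrite // A_sym.
have Hzx1 : A z x = 1 by rewrite A_sym; apply: (other _ y); rewrite // A_sym.
by apply: (notri (x:=x) (y:=y) (z:=z)); split; rewrite /adjacent ?Hxy ?Hyz1 ?Hzx1.
Qed.

Lemma triangle_pos x y z : A x y != 0 -> A y z != 0 -> A z x != 0 ->
  [/\ A x y = 1, A y z = 1 & A z x = 1].
Proof.
have edge u v w : A u v != 0 -> A v w != 0 -> A w u != 0 -> A u v = 1.
  move=> huv hvw hwu; case: (A_vals u v) => // [e|e]; last by rewrite e in huv.
  by case: (neg_edge_triangle_free e hvw hwu).
move=> hxy hyz hzx.
by split; [apply: (edge _ _ z) | apply: (edge _ _ x) | apply: (edge _ _ y)].
Qed.

Lemma pos_edge x : exists y, A x y = 1.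
Proof.
have /card_gt0P[y] : (0 < #|pos_nbr x|)%N by rewrite (card_pos_neg x).1.
by rewrite inE => /eqP; exists y.
Qed.

Lemma mate_pos_nonadj x y : A x y = 1 -> x != mate y /\ A x (mate y) = 0.
Proof.
move=> H; split.
  by apply: contra_eq_neq H => ->; rewrite A_sym A_mate.
case: (boolP (A x (mate y) == 0)) => [/eqP//|h].
by case: (neg_edge_triangle_free (A_mate y) (z := x)); rewrite ?H // A_sym.
Qed.

Definition common x y := [set z | (A x z == 1) && (A z y == 1)].

Lemma A2_pos x y : A x y = 1 -> A2 A x y = #|common x y|%:R.
Proof.
move=> H; rewrite /A2 /common -sumr_indicator; apply: eq_bigr => z _.
case: (boolP (A x z == 0)) => [/eqP->|h1]; first by rewrite mul0r; case: eqP.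
case: (boolP (A z y == 0)) => [/eqP->|h2]; first by rewrite mulr0 andbF.
have h3 : A y x != 0 by rewrite A_sym H.
by case: (triangle_pos h1 h2 h3) => -> ->.
Qed.

Lemma A2_neg x y : A x y = -1 -> A2 A x y = 0.
Proof.
move=> H; rewrite /A2 big1 // => z _.
case: (boolP (A x z == 0)) => [/eqP->|h1]; first by rewrite mul0r.
case: (boolP (A z y == 0)) => [/eqP->|h2]; first by rewrite mulr0.
by case: (neg_edge_triangle_free H (z := z)); rewrite A_sym.
Qed.

Lemma A2_diag x : A2 A x x = 5.
Proof.
rewrite /A2 -[5]/(5%:R) -(reg5 x) /degree -sumr_indicator.
by apply: eq_bigr => y _; rewrite /adjacent (A_sym y x); case: (A_vals x y) => ->.
Qed.

Lemma common_sub x y : A x y = 1 -> common x y \subset pos_nbr x :\ y.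
Proof.
move=> H; apply/subsetP => z; rewrite !inE => /andP[/eqP h1 /eqP h2].
by rewrite h1 eqxx andbT; apply: contra_eqN h2 => /eqP ->; rewrite A_diag.
Qed.

Lemma card_pos_nbrD1 x y : A x y = 1 -> #|pos_nbr x :\ y| = 3%N.
Proof.
by move=> H; have := cardsD1 y (pos_nbr x); rewrite (card_pos_neg x).1 !inE H eqxx => -[].
Qed.

Lemma card_common x y : A x y = 1 -> (#|common x y| <= 3)%N.
Proof. by move=> H; rewrite -(card_pos_nbrD1 H) subset_leq_card ?common_sub. Qed.

Lemma sum_A2_row x : \sum_y A2 A x y = 9.
Proof.
rewrite /A2 exchange_big /= (eq_bigr (fun z => A x z * 3)); last first.
  by move=> z _; rewrite -mulr_sumr; have := net3 z; rewrite /net_degree => ->.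
by rewrite -mulr_suml; have := net3 x; rewrite /net_degree => ->.
Qed.

Definition nonadj x := [set y | (y != x) && (A x y == 0)].

Lemma card_nonadj x : #|T| = (6 + #|nonadj x|)%N.
Proof.
have parts y : 1 = ((y == x) : bool)%:R + (adjacent A x y)%:R
                   + ((y != x) && (A x y == 0))%:R :> int.
  case: (eqVneq y x) => [->|yx]; first by rewrite /adjacent A_diag.
  by rewrite /adjacent /=; case: (A x y == 0).
suff : (#|T|%:R : int) = 6 + #|nonadj x|%:R by lia.
transitivity (\sum_(y : T) (1 : int)); first by rewrite sumr_const.
rewrite (eq_bigr _ (fun y _ => parts y)) !big_split /=.
rewrite !sumr_indicator (eq_card (B := pred1 x)) ?card1; last by move=> y; rewrite inE.
by have := reg5 x; rewrite /degree /nonadj => ->.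
Qed.

Lemma nonadj_gt0 x : (0 < #|nonadj x|)%N.
Proof.
have [y /mate_pos_nonadj[ne e]] := pos_edge x.
by apply/card_gt0P; exists (mate y); rewrite inE eq_sym ne e eqxx.
Qed.

Section TriangleFree.
Hypothesis common0 : forall u v, A u v = 1 -> #|common u v| = 0%N.

Lemma triangle_free x y z : A x y != 0 -> A y z != 0 -> A z x != 0 -> False.
Proof.
move=> h1 h2 h3; have [e1 e2 e3] := triangle_pos h1 h2 h3.
have /eqP := common0 e1; rewrite cards_eq0 => /eqP C0.
have : z \in common x y by rewrite inE A_sym e3 A_sym e2 eqxx.
by rewrite C0 inE.
Qed.

Definition nbr x := [set y | adjacent A x y].

Lemma card_nbr x : #|nbr x| = 5%N. Proof. exact: reg5. Qed.

Lemma nbr_disjoint x y : A x y != 0 -> [disjoint nbr x & nbr y].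
Proof.
move=> hxy; apply/pred0P => z /=; apply/negP; rewrite !inE /adjacent => /andP[h1 h2].
by apply: (triangle_free hxy h2); rewrite A_sym.
Qed.

Lemma triangle_free_card (x : T) : (10 <= #|T|)%N.
Proof.
have [y e] := pos_edge x; have hxy : A x y != 0 by rewrite e.
have := max_card (mem (nbr x :|: nbr y)).
by rewrite card_disjointU ?nbr_disjoint // !card_nbr.
Qed.

Lemma triangle_free_bipartite (x0 : T) : #|T| = 10%N ->
  forall p q, (A p q != 0) = ((p \in nbr x0) != (q \in nbr x0)).
Proof.
move=> cT10; set W := nbr x0.
have cU : #|~: W| = 5%N by have := cardsC W; rewrite card_nbr cT10 => /eqP; lia.
have nbr_in w : w \in W -> nbr w = ~: W.
  move=> wW; apply/eqP; rewrite eqEcard card_nbr cU leqnn andbT.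
  apply/subsetP => q; rewrite !inE /adjacent => h2; apply/negP => h3.
  move: h3 wW; rewrite ?inE /adjacent => h3 h1.
  by apply: (triangle_free h1 h2); rewrite A_sym.
have nbr_out v : v \notin W -> nbr v = W.
  move=> vW; apply/esym/eqP; rewrite eqEcard !card_nbr leqnn andbT.
  apply/subsetP => w wW; move: (nbr_in w wW) => /setP/(_ v).
  by rewrite inE [v \in ~: W]inE vW /adjacent => h; rewrite inE /adjacent A_sym.
move=> p q; case: (boolP (p \in W)) => pW.
  by move: (nbr_in p pW) => /setP/(_ q); rewrite !inE /adjacent.
by move: (nbr_out p pW) => /setP/(_ q); rewrite [q \in nbr p]inE /adjacent => ->; case: (q \in W).
Qed.

Lemma triangle_free_iso : #|T| = 10%N -> sg_iso A S2_10.
Proof.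
move=> cT10; have /card_gt0P[x0 _] : (0 < #|T|)%N by rewrite cT10.
set W := nbr x0; have adjW := triangle_free_bipartite x0 cT10.
have cU : #|~: W| = 5%N by have := cardsC W; rewrite card_nbr cT10 => /eqP; lia.
have [u [u_inj uW]] := card5_ord_inj cU.
have mate_uW t : mate (u t) \in W.
  have := A_mate (u t); move: (uW t); rewrite inE => /negbTE uWF e.
  by have := adjW (u t) (mate (u t)); rewrite e uWF; case: (_ \in W).
have u_mate t s : u t != mate (u s).
  by apply/eqP => e; move: (uW t); rewrite e inE mate_uW.
have same_side p q : (p \in W) = (q \in W) -> A p q = 0.
  by move=> e; apply/eqP; rewrite -[_ == 0]negbK adjW e eqxx.
have cross s t : A (u s) (mate (u t)) = if s == t then -1 else 1.
  case: (eqVneq s t) => [->|st]; first exact: A_mate.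
  have : A (u s) (mate (u t)) != 0.
    by rewrite adjW mate_uW; move: (uW s); rewrite inE => /negbTE ->.
  case: (A_vals (u s) (mate (u t))) => e hn; [|by rewrite e in hn|by []].
  by move: (mate_uniq e) => /mate_inj/u_inj e'; rewrite e' eqxx in st.
pose h (p : V10) := if p.1 then mate (u p.2) else u p.2.
apply: (sg_iso_of_inj (h := h)) => //.
  move=> [[] s] [[] t]; rewrite /h /=.
  - by move/mate_inj/u_inj => ->.
  - by move=> e; move: (u_mate t s); rewrite e eqxx.
  - by move=> e; move: (u_mate s t); rewrite e eqxx.
  - by move/u_inj => ->.
move=> [[] s] [[] t]; rewrite /h /S2_10 /=.
- by rewrite same_side // !mate_uW.
- by rewrite A_sym cross eq_sym.
- by rewrite cross.
- by rewrite same_side //; move: (uW s) (uW t); rewrite !inE => /negbTE -> /negbTE ->.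
Qed.

End TriangleFree.

Lemma A2_ge_common u v (E : {set T}) :
  (forall z, z \in E -> A u z = 1 /\ A z v = 1) -> #|E|%:R - 2 <= A2 A u v.
Proof.
move=> HE.
have neg1 w : \sum_z ((A w z == -1) : bool)%:R = 1 :> int.
  by rewrite sumr_indicator; have := (card_pos_neg w).2; rewrite /neg_nbr => ->.
have -> : (#|E|%:R - 2 : int) = \sum_z (((z \in E) : bool)%:R
      - ((A u z == -1) : bool)%:R - ((A v z == -1) : bool)%:R).
  rewrite !sumrB !neg1 sumr_indicator.
  by rewrite (_ : [set z in E] = E); [lia | apply/setP => z; rewrite inE].
rewrite /A2; apply: ler_sum => z _; rewrite (A_sym v z).
case: (boolP (z \in E)) => zE; first by case: (HE z zE) => -> ->.
by case: (A_vals u z) => ->; case: (A_vals z v) => ->.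
Qed.

Section TwoTriangles.
Hypothesis common2 : forall u v, A u v = 1 -> #|common u v| = 2%N.

Lemma common2_nonadj_A2_pos (x : T) :
  exists y1 y3, [/\ y1 != y3, A y1 y3 = 0 & 1 <= A2 A y1 y3].
Proof.
have [y1 Hy1] := pos_edge x.
have sub1 := common_sub Hy1.
have : (0 < #|(pos_nbr x :\ y1) :\: common x y1|)%N.
  by rewrite cardsD (setIidPr sub1) card_pos_nbrD1 // common2.
case/card_gt0P => y3; rewrite !inE => /andP[nC /andP[y31 /eqP Hy3]].
have A13 : A y1 y3 = 0.
  have A31 : A y3 y1 != 1 by move: nC; rewrite Hy3 eqxx.
  case: (A_vals y1 y3) => // e; last by rewrite A_sym e in A31.
  by case: (neg_edge_triangle_free e (z := x)); [rewrite A_sym Hy3 | rewrite Hy1].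
set D := (pos_nbr x :\ y1) :\ y3.
have cD : #|D| = 2%N.
  have := cardsD1 y3 (pos_nbr x :\ y1).
  by rewrite card_pos_nbrD1 // !inE y31 Hy3 eqxx => -[].
have sub_D y : A x y = 1 -> common x y \subset D -> common x y = D.
  by move=> Hy sub; apply/eqP; rewrite eqEcard sub cD common2.
have e1 : common x y1 = D.
  apply: sub_D => //; apply/subsetP => z zC; have := subsetP sub1 z zC.
  rewrite !inE => /andP[-> ->] /=; rewrite andbT.
  by apply: contraNneq nC => <-; rewrite inE in zC.
have e3 : common x y3 = D.
  apply: sub_D => //; apply/subsetP => z zC; have := subsetP (common_sub Hy3) z zC.
  rewrite !inE => /andP[-> ->] /=; rewrite andbT.
  by apply: contraTneq zC => ->; rewrite inE A13 andbF.
exists y1, y3; split; rewrite 1?eq_sym //.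
have xD : x \notin D by rewrite !inE A_diag !andbF.
have := A2_ge_common (u := y1) (v := y3) (E := x |: D).
rewrite cardsU1 xD cD; apply => z; rewrite in_setU1 => /orP[/eqP ->|zD].
  by rewrite A_sym Hy1 Hy3.
move: (zD) (zD); rewrite -{1}e1 -e3 !inE => /andP[_ /eqP h1] /andP[_ /eqP h3].
by rewrite A_sym h1 h3.
Qed.

End TwoTriangles.

Section Cliques.
Hypothesis common3 : forall u v, A u v = 1 -> #|common u v| = 3%N.

Definition clique x := x |: pos_nbr x.

Lemma pos_pos_adj x y z : A x y = 1 -> A x z = 1 -> y != z -> A y z = 1.
Proof.
move=> Hy Hz yz.
have e : common x y = pos_nbr x :\ y.
  by apply/eqP; rewrite eqEcard common_sub // common3 // card_pos_nbrD1.
have : z \in common x y by rewrite e !inE Hz eqxx eq_sym yz.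
by rewrite inE => /andP[_ /eqP]; rewrite A_sym.
Qed.

Lemma card_clique x : #|clique x| = 5%N.
Proof. by rewrite cardsU1 (card_pos_neg x).1 inE A_diag. Qed.

Lemma clique_self x : x \in clique x. Proof. exact: setU11. Qed.

Lemma clique_adj x y z : y \in clique x -> z \in clique x -> y != z -> A y z = 1.
Proof.
rewrite !inE => /orP[/eqP->|/eqP Hy] /orP[/eqP->|/eqP Hz] yz.
- by rewrite eqxx in yz.
- by [].
- by rewrite A_sym.
- exact: pos_pos_adj Hy Hz yz.
Qed.

Lemma clique_A x y z : y \in clique x -> z \in clique x -> A y z = (y != z)%:R.
Proof.
move=> yK zK; case: (eqVneq y z) => [->|yz]; first by rewrite A_diag.
exact: clique_adj yK zK yz.
Qed.

Lemma clique_eq x y : y \in clique x -> clique y = clique x.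
Proof.
move=> yK; apply/esym/eqP; rewrite eqEcard !card_clique leqnn andbT.
apply/subsetP => w wK; case: (eqVneq w y) => [->|wy]; first exact: clique_self.
by rewrite !inE (clique_adj yK wK) 1?eq_sym // eqxx orbT.
Qed.

Lemma clique_disjoint x y : y \notin clique x -> [disjoint clique x & clique y].
Proof.
move=> yK; apply/pred0P => w /=; apply/negP => /andP[w1 w2].
by move: yK; rewrite -(clique_eq w1) (clique_eq w2) clique_self.
Qed.

Lemma adj_clique_mate x w : A x w != 0 -> w \in clique x \/ w = mate x.
Proof.
case: (A_vals x w) => e hw.
- by right; apply: mate_uniq.
- by rewrite e in hw.
- by left; rewrite !inE e eqxx orbT.
Qed.

Lemma mate_clique x : mate x \notin clique x.
Proof. by rewrite !inE A_mate negb_or mate_neq. Qed.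

Lemma A2_pos_mate x y : A x y = 1 -> A2 A x (mate y) = -1 - A (mate x) (mate y).
Proof.
move=> H; rewrite /A2 (bigD1 (mate x)) //= (bigD1 y) /=; last first.
  by apply/eqP => e; have := A_mate x; rewrite -e H.
rewrite big1 ?addr0; last first.
  move=> z /andP[zmx zy].
  case: (boolP (A x z == 0)) => [/eqP->|h]; first by rewrite mul0r.
  have Hz : A x z = 1.
    case: (adj_clique_mate h) => [zK|e]; last by rewrite e eqxx in zmx.
    by rewrite (clique_adj (clique_self x) zK) // eq_sym; apply: contraNneq h => ->; rewrite A_diag.
  have Hzy : A z y = 1 by exact: pos_pos_adj Hz H zy.
  case: (boolP (A z (mate y) == 0)) => [/eqP->|h2]; first by rewrite mulr0.
  by case: (neg_edge_triangle_free (A_mate y) (z := z)); rewrite ?Hzy // A_sym.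
by rewrite !A_mate H; ring.
Qed.

Lemma card_three_cliques x y :
  A x y = 1 -> A (mate x) (mate y) = 0 -> (15 <= #|T|)%N.
Proof.
move=> Hxy Hm; have [xmy A0] := mate_pos_nonadj Hxy.
have d1 : [disjoint clique x & clique (mate x)] by apply/clique_disjoint/mate_clique.
have d2 : [disjoint clique x & clique (mate y)].
  by apply: clique_disjoint; rewrite !inE A0 eq_sym (negbTE xmy).
have d3 : [disjoint clique (mate x) & clique (mate y)].
  apply: clique_disjoint; rewrite !inE Hm /= orbF.
  by apply: contra_eq_neq Hxy => /mate_inj ->; rewrite A_diag.
have := max_card (mem (clique x :|: clique (mate x) :|: clique (mate y))).
rewrite cardsU setIUl (disjoint_setI0 d2) (disjoint_setI0 d3) setU0 cards0 subn0.
by rewrite card_disjointU // !card_clique.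
Qed.

Lemma mate_pos_iso :
  (forall u v, A u v = 1 -> A (mate u) (mate v) = 1) -> #|T| = 10%N ->
  sg_iso A S3_10.
Proof.
move=> mate_pos cT10; have /card_gt0P[x0 _] : (0 < #|T|)%N by rewrite cT10.
have d1 : [disjoint clique x0 & clique (mate x0)] by apply/clique_disjoint/mate_clique.
have [u [u_inj uK]] := card5_ord_inj (card_clique x0).
have mate_uK t : mate (u t) \in clique (mate x0).
  have := uK t; rewrite !inE => /orP[/eqP->|/eqP h]; first by rewrite eqxx.
  by rewrite mate_pos // eqxx orbT.
have u_mate t s : u t != mate (u s).
  by apply/eqP => e; move: (disjointFr d1 (uK t)); rewrite e mate_uK.
have cross s t : A (u s) (mate (u t)) = if s == t then -1 else 0.
  case: (eqVneq s t) => [->|st]; first exact: A_mate.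
  case: (boolP (A (u s) (mate (u t)) == 0)) => [/eqP //|h1].
  case: (adj_clique_mate h1) => [|/mate_inj/u_inj e]; last by rewrite e eqxx in st.
  rewrite (clique_eq (uK s)) => e; move: (u_mate s t).
  by move: (disjointFr d1 e); rewrite mate_uK.
pose h (p : V10) := if p.1 then mate (u p.2) else u p.2.
apply: (sg_iso_of_inj (h := h)) => //.
  move=> [[] s] [[] t]; rewrite /h /=.
  - by move/mate_inj/u_inj => ->.
  - by move=> e; move: (u_mate t s); rewrite e eqxx.
  - by move=> e; move: (u_mate s t); rewrite e eqxx.
  - by move/u_inj => ->.
move=> [[] s] [[] t]; rewrite /h /S3_10 /=.
- by rewrite (clique_A (mate_uK s) (mate_uK t)) (inj_eq mate_inj) (inj_eq u_inj); case: eqP.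
- by rewrite A_sym cross eq_sym.
- by rewrite cross.
- by rewrite (clique_A (uK s) (uK t)) (inj_eq u_inj); case: eqP.
Qed.

End Cliques.

Section AdjacencyMatrix.
Variables (k : nat) (f : 'I_k.+1 -> T).
Hypothesis f_bij : bijective f.

Definition adj_mx : 'M[int]_k.+1 := \matrix_(i, j) A (f i) (f j).

Lemma sum_ord_bij (G : T -> int) : \sum_i G (f i) = \sum_x G x.
Proof. by symmetry; apply: reindex; apply: onW_bij. Qed.

Lemma adj_mx_sym : adj_mx^T = adj_mx.
Proof. by apply/matrixP => i j; rewrite !mxE A_sym. Qed.

Lemma adj_mx_sqr i j : (adj_mx ^+ 2) i j = A2 A (f i) (f j).
Proof.
rewrite expr2 -mulmxE mxE /A2 -sum_ord_bij.
by apply: eq_bigr => l _; rewrite !mxE.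
Qed.

Lemma tr_adj_mx : \tr adj_mx = 0.
Proof. by rewrite (mxtrace_const (c := 0)) ?mul0r // => i; rewrite mxE A_diag. Qed.

Lemma tr_adj_mx2 : \tr (adj_mx ^+ 2) = 5 * k.+1%:R.
Proof. by apply: mxtrace_const => i; rewrite adj_mx_sqr A2_diag. Qed.

End AdjacencyMatrix.

Section OneTriangle.
Hypothesis common1 : forall u v, A u v = 1 -> #|common u v| = 1%N.
Hypothesis A2_nonadj0 : forall u v, u != v -> A u v = 0 -> A2 A u v = 0.

Definition pos_ind x y : int := (A x y == 1)%:R.

Lemma pos_ind_sym x y : pos_ind x y = pos_ind y x.
Proof. by rewrite /pos_ind A_sym. Qed.

Lemma sum_pos_ind x : \sum_y pos_ind x y = 4.
Proof. by rewrite sumr_indicator; have := (card_pos_neg x).1; rewrite /pos_nbr => ->. Qed.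

Lemma A2_common1 x y : A2 A x y = (x == y)%:R * 5 + pos_ind x y.
Proof.
rewrite /pos_ind; case: (eqVneq x y) => [->|xy]; first by rewrite A2_diag A_diag.
case: (A_vals x y) => e; rewrite e /=.
- by rewrite A2_neg //; ring.
- by rewrite A2_nonadj0 //; ring.
- by rewrite A2_pos // common1.
Qed.

Lemma pos_ind_triangle x y :
  pos_ind x y * \sum_z pos_ind y z * pos_ind x z = pos_ind x y.
Proof.
rewrite /pos_ind; case: (boolP (A x y == 1)) => [/eqP e|]; last by rewrite !mul0r.
rewrite mul1r; transitivity (#|common x y|%:R : int); last by rewrite common1.
rewrite -sumr_indicator; apply: eq_bigr => z _.
by rewrite (A_sym y z); case: (A x z == 1); case: (A z y == 1).
Qed.

Lemma sum_neg_ind_sqr x y :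
  \sum_z ((A x z == -1)%:R * (A z y == -1)%:R : int) = (x == y)%:R.
Proof.
rewrite (bigD1 (mate x)) //= big1 ?addr0.
  suff -> : (A (mate x) y == -1) = (x == y) by rewrite A_mate eqxx mul1r.
  apply/idP/idP => [/eqP/mate_uniq|/eqP<-]; first by rewrite mateK => ->.
  by rewrite A_sym A_mate.
move=> z zm; case: (boolP (A x z == -1)) => [/eqP/mate_uniq e|]; last by rewrite mul0r.
by rewrite e eqxx in zm.
Qed.

Lemma quad_form_ge0 (w : T -> int) :
  0 <= \sum_x w x * \sum_y ((x == y)%:R * 2 + pos_ind x y) * w y.
Proof.
(* Each positive edge lies in exactly one triangle and each vertex in two, so
   summing (w x + w y + w z)^2 over ordered triangles gives 6 times the form. *)
pose t x y z := pos_ind x y * (pos_ind y z * pos_ind x z).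
have t12 x y z : t x y z = t y x z by rewrite /t pos_ind_sym; ring.
have t23 x y z : t x y z = t x z y by rewrite /t (pos_ind_sym z y); ring.
have Sx : \sum_x \sum_y \sum_z t x y z * w x ^+ 2 = 4 * \sum_x w x ^+ 2.
  rewrite mulr_sumr; apply: eq_bigr => x _.
  rewrite -(sum_pos_ind x) mulr_suml; apply: eq_bigr => y _.
  rewrite -[in RHS](pos_ind_triangle x y) -mulrA mulr_suml mulr_sumr.
  by apply: eq_bigr => z _; rewrite /t; ring.
have Sxy : \sum_x \sum_y \sum_z t x y z * (w x * w y) =
    \sum_x \sum_y pos_ind x y * (w x * w y).
  apply: eq_bigr => x _; apply: eq_bigr => y _.
  rewrite -[in RHS](pos_ind_triangle x y) -mulrA mulr_suml mulr_sumr.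
  by apply: eq_bigr => z _; rewrite /t; ring.
have Q : \sum_x w x * \sum_y ((x == y)%:R * 2 + pos_ind x y) * w y =
    2 * \sum_x w x ^+ 2 + \sum_x \sum_y pos_ind x y * (w x * w y).
  rewrite mulr_sumr -big_split; apply: eq_bigr => x _.
  rewrite /= mulr_sumr (eq_bigr (fun y => (x == y)%:R * 2 * (w x * w y)
     + pos_ind x y * (w x * w y))); last by move=> y _; ring.
  rewrite big_split /= (bigD1 x) //= eqxx big1 ?addr0 /=; first by ring.
  by move=> y /negbTE; rewrite eq_sym => -> /=; ring.
have sq_ge0 : 0 <= \sum_x \sum_y \sum_z t x y z * (w x + w y + w z) ^+ 2.
  do 3 (apply: sumr_ge0 => ? _); apply: mulr_ge0; last exact: sqr_ge0.
  by rewrite /t /pos_ind !mulr_ge0 ?ler0n.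
move: sq_ge0; rewrite sum3_sym_sqr // Sx Sxy Q; lia.
Qed.

Lemma tr_adj_mx3 k (f : 'I_k.+1 -> T) : bijective f ->
  \tr (adj_mx f ^+ 3) = 4 * k.+1%:R.
Proof.
move=> f_bij; apply: mxtrace_const => i.
rewrite exprS -mulmxE mxE -(sum_pos_ind (f i)) -(sum_ord_bij f_bij).
apply: eq_bigr => l _; rewrite mxE adj_mx_sqr // A2_common1 /pos_ind.
case: (eqVneq (f l) (f i)) => [->|li] /=; first by rewrite A_diag mul0r.
by rewrite (A_sym (f l)); case: (A_vals (f i) (f l)) => ->.
Qed.

Lemma adj_mx_neg_sqr k (f : 'I_k.+1 -> T) : bijective f ->
  (adj_mx f ^+ 2 - adj_mx f - 5) ^+ 2 = 1.
Proof.
move=> f_bij; have f_inj := bij_inj f_bij.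
have negE i j : (adj_mx f ^+ 2 - adj_mx f - 5) i j = (A (f i) (f j) == -1)%:R.
  have -> : (adj_mx f ^+ 2 - adj_mx f - 5) i j =
      (adj_mx f ^+ 2) i j - adj_mx f i j - (5 : 'M[int]_k.+1) i j by rewrite !mxE.
  rewrite adj_mx_sqr // A2_common1 /pos_ind !mxE (inj_eq f_inj).
  case: (eqVneq i j) => [->|ij] /=; first by rewrite A_diag /=; ring.
  by case: (A_vals (f i) (f j)) => -> /=; ring.
apply/matrixP => i j; rewrite expr2 -mulmxE !mxE.
transitivity (\sum_x ((A (f i) x == -1)%:R * (A x (f j) == -1)%:R : int)).
  by rewrite -(sum_ord_bij f_bij); apply: eq_bigr => l _; rewrite !negE.
by rewrite sum_neg_ind_sqr (inj_eq f_inj).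
Qed.

Lemma adj_mx_quad_ge0 k (f : 'I_k.+1 -> T) (M : 'M[int]_k.+1) : bijective f ->
  0 <= \tr (M^T *m (adj_mx f ^+ 2 - 3) *m M).
Proof.
move=> f_bij; have [g fK gK] := f_bij.
apply: mxtrace_quad_ge0 => v.
have := quad_form_ge0 (fun x => v (g x)); congr (_ <= _).
rewrite -(sum_ord_bij f_bij); apply: eq_bigr => j _; rewrite fK; congr (_ * _).
rewrite -(sum_ord_bij f_bij); apply: eq_bigr => l _; rewrite fK.
have -> : (adj_mx f ^+ 2 - 3) j l = (adj_mx f ^+ 2) j l - (3 : 'M[int]_k.+1) j l.
  by rewrite !mxE.
rewrite adj_mx_sqr // A2_common1 !mxE (inj_eq (bij_inj f_bij)); ring.
Qed.

Lemma common1_false (x0 : T) : False.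
Proof.
have ek : (#|T|.-1).+1 = #|T| by rewrite (card_nonadj x0).
pose f i := enum_val (cast_ord ek i).
have f_bij : bijective f.
  exists (fun x => cast_ord (esym ek) (enum_rank x)) => [i|x].
    by rewrite /f enum_valK cast_ordK.
  by rewrite /f cast_ordKV enum_rankK.
have [M] := sqr_sub3_not_psd (adj_mx_sym f) (adj_mx_neg_sqr f_bij)
  (tr_adj_mx f) (tr_adj_mx2 f_bij) (tr_adj_mx3 f_bij).
by rewrite ltNge adj_mx_quad_ge0.
Qed.

End OneTriangle.

Section SRSGConstants.
Variables (a c : int).
Hypothesis A2_pos_const : forall u v, A u v = 1 -> A2 A u v = a.
Hypothesis A2_nonadj_const : forall u v, u != v -> A u v = 0 -> A2 A u v = c.

Lemma card_common_const u v : A u v = 1 -> #|common u v|%:R = a.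
Proof. by move=> e; rewrite -A2_pos // A2_pos_const. Qed.

Lemma srsg_count x : 4 * a + c * #|nonadj x|%:R = 4.
Proof.
have : \sum_y A2 A x y = 5 + a * 4 + c * #|nonadj x|%:R.
  transitivity (\sum_y ((y == x)%:R * 5 + (A x y == 1)%:R * a
                        + ((y != x) && (A x y == 0))%:R * c)).
    apply: eq_bigr => y _; case: (eqVneq y x) => [->|yx] /=.
      by rewrite A2_diag A_diag /=; ring.
    case: (A_vals x y) => e; rewrite e /=.
    - by rewrite A2_neg //=; ring.
    - by rewrite A2_nonadj_const 1?eq_sym //=; ring.
    - by rewrite A2_pos_const //=; ring.
  rewrite !big_split /= -!mulr_suml !sumr_indicator.
  rewrite (eq_card (B := pred1 x)) ?card1 => [|y]; last by rewrite inE.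
  by have := (card_pos_neg x).1; rewrite /pos_nbr => ->; rewrite /nonadj; ring.
rewrite sum_A2_row; lia.
Qed.

Lemma srsg_classification (x0 : T) :
  (a = 0 /\ c = 1 /\ #|T| = 10%N /\ sg_iso A S2_10)
  \/ (a = 3 /\ c = -2 /\ #|T| = 10%N /\ sg_iso A S3_10).
Proof.
have [y0 e0] := pos_edge x0.
have cT := card_nonadj x0; have Z0 := nonadj_gt0 x0.
have common_k u v : A u v = 1 -> #|common u v| = #|common x0 y0|.
  by move=> e; apply/eqP; rewrite -(eqr_nat int) !card_common_const.
move: (card_common e0) common_k (card_common_const e0) (srsg_count x0).
case: #|common x0 y0| => [|[|[|[|k]]]] // _ Hk <- count.
- have T10 := triangle_free_card Hk x0.
  have c1 : c = 1 by nia.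
  have n10 : #|T| = 10%N by move: count; rewrite c1; lia.
  by left; do 3 split => //; apply: triangle_free_iso.
- exfalso; apply: (common1_false Hk _ x0) => u v uv e.
  by rewrite A2_nonadj_const //; nia.
- exfalso; have [y1 [y3 [y13 A13]]] := common2_nonadj_A2_pos Hk x0.
  by rewrite A2_nonadj_const //; nia.
- right; have c_mate u v : A u v = 1 -> c = -1 - A (mate u) (mate v).
    move=> e; have [ne A0] := mate_pos_nonadj e.
    by rewrite -(A2_nonadj_const ne A0) A2_pos_mate.
  case: (A_vals (mate x0) (mate y0)) => em; move: (c_mate _ _ e0); rewrite em => ec.
  + by move: count; rewrite ec; lia.
  + by have := card_three_cliques Hk e0 em; move: count; rewrite ec; lia.
  + have c2 : c = -2 by rewrite ec.
    have n10 : #|T| = 10%N by move: count; rewrite c2; lia.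
    do 3 split => //.
    by apply: mate_pos_iso => // u v /c_mate; rewrite c2; lia.
Qed.

End SRSGConstants.

End SignedGraph.

Unset Implicit Arguments.
Set Strict Implicit.

Theorem mainTheorem3 (T : finType) (A : T -> T -> int)
    (n r : nat) (a b c : int) :
  signed_graph A ->
  is_SRSG A n r a b c ->
  sg_connected A ->
  ~ complete A ->
  regular A 5 ->
  net_regular A 3 ->
  (class_C1 A a b c \/ class_C4 A a b c \/ class_C5 A a b c) ->
  no_unbalanced_triangle A ->
  (sg_iso A S2_10 /\ [/\ n = 10%N, r = 5%N, a = 0, b = 0 & c = 1])
  \/ (sg_iso A S3_10 /\ [/\ n = 10%N, r = 5%N, a = 3, b = 0 & c = -2]).
Proof.
move=> sgA [<- _ not_edgeless [A2_diag_r A2_pos_a A2_neg_b A2_nonadj_c]] _ _ reg5 net3 _ notri.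
have [x0 _] : exists x0 : T, true.
  case: (pickP (fun _ : T => true)) => [x _|none]; first by exists x.
  by case: not_edgeless => x; move: (none x).
have r5 : r = 5%N by have := A2_diag_r x0; rewrite (A2_diag sgA reg5); lia.
have neg_edge := A_mate sgA reg5 net3 x0.
have b0 : b = 0 by rewrite -(A2_neg_b _ _ neg_edge) (A2_neg sgA reg5 net3 notri neg_edge).
have [] := srsg_classification sgA reg5 net3 notri A2_pos_a A2_nonadj_c x0.
- by move=> [-> [-> [-> iso]]]; left.
- by move=> [-> [-> [-> iso]]]; right.
Qed.
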